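(* Suppose $f$ is $L_f$-smooth, $\mathbf{c}$ is $L_c$-smooth, and there exist $C,G>0$ such that for all $\mathbf{x}$: $\|\nabla f(\mathbf{x})\|\le G$, all subgradients of $h$ and $g$ have norm at most $G$, $\|\nabla\mathbf{c}(\mathbf{x})\|\le G$, $\|\mathbf{c}(\mathbf{x})\|\le C$. Suppose the parameters satisfy $\mu_kL_{\rho_k}\le\frac14$, $\mu_{k+1}\le\mu_k$, $\rho_k\le\rho_{k+1}$, $0<\beta\le1$ for all $k\ge0$. Then for any $k\ge0$, $\mathcal{L}_{\rho_{k+1},\mu_{k+1}}(\mathbf{w}^{k+1})\le\mathcal{L}_{\rho_k,\mu_k}(\mathbf{w}^k)-\frac{(2\mu_k)^{-1}-L_{\rho_k}}{2}\|\mathbf{w}^{k+1}-\mathbf{w}^k\|^2+\frac{\rho_{k+1}-\rho_k}{2}C^2+\Delta_{k+1}+\mu_k\|\mathbf{e}^k\|^2$, where $\Delta_{k+1}:=\frac{|\mu_k-\mu_{k+1}|}{2\mu_{k+1}^2}(C^2+\|\mathbf{x}^{k+1}-\mathbf{z}^{k+1}\|^2)$. Moreover, $\|\mathbf{w}^{k+1}-\mathbf{w}^k\|^2\le\frac{4\mu_k}{1-2\mu_kL_{\rho_k}}\bigl(\mathcal{L}_{\rho_k,\mu_k}(\mathbf{w}^k)-\mathcal{L}_{\rho_{k+1},\mu_{k+1}}(\mathbf{w}^{k+1})+\Delta_{k+1}+\frac{\rho_{k+1}-\rho_k}{2}C^2+\mu_k\|\mathbf{e}^k\|^2\bigr)$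.
   Context: Problem: $\min f(\mathbf{x})+h(\mathbf{x})-g(\mathbf{x})$ s.t. $\mathbf{c}(\mathbf{x})=\mathbf{0}$, $f=\mathbb{E}_\xi[\mathbf{f}(\cdot,\xi)]$, $h,g$ proper closed convex. $Q_\rho(\mathbf{x})=f(\mathbf{x})+\frac{\rho}{2}\|\mathbf{c}(\mathbf{x})\|^2$, which is $L_\rho$-smooth with $L_\rho=\rho(\rho_0^{-1}L_f+G^2+CL_c)$. Potential function $\mathcal{L}_{\rho,\mu}(\mathbf{w})=Q_\rho(\mathbf{x})+h(\mathbf{x})+\frac{1}{2\mu}\|\mathbf{x}-\mathbf{z}\|^2-\mathcal{M}_{\mu g}(\mathbf{z})$ for $\mathbf{w}=(\mathbf{x},\mathbf{z})$, where $\mathcal{M}_{\mu g}(\mathbf{z})=\min_{\mathbf{x}}\{g(\mathbf{x})+\frac{1}{2\mu}\|\mathbf{x}-\mathbf{z}\|^2\}$. Iterates $\mathbf{w}^k=(\mathbf{x}^k,\mathbf{z}^k)$ are generated by MoSSP-P or MoSSP-R: $\mathbf{x}^{k+1}=\mathrm{prox}_{\mu_kh}(\mathbf{z}^k-\mu_k\mathbf{G}^k)$, $\mathbf{z}^{k+1}=\mathbf{z}^k-\beta(\mathrm{prox}_{\mu_kg}(\mathbf{z}^k)-\mathbf{x}^{k+1})$, where $\mathbf{G}^k$ is the stochastic estimator $\mathbf{S}^k$ (Polyak momentum: $\mathbf{S}^k=\mathbf{s}^k+\rho_k\nabla\mathbf{c}(\mathbf{x}^k)\mathbf{c}(\mathbf{x}^k)$,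 $\mathbf{s}^k=(1-\alpha_{k-1})\mathbf{s}^{k-1}+\alpha_{k-1}\nabla\mathbf{f}(\mathbf{x}^k,\xi^k)$) or $\mathbf{D}^k$ (recursive momentum: $\mathbf{D}^k=\mathbf{d}^k+\rho_k\nabla\mathbf{c}(\mathbf{x}^k)\mathbf{c}(\mathbf{x}^k)$, $\mathbf{d}^k=\nabla\mathbf{f}(\mathbf{x}^k,\xi^k)+(1-\alpha_{k-1})(\mathbf{d}^{k-1}-\nabla\mathbf{f}(\mathbf{x}^{k-1},\xi^k))$), and $\mathbf{e}^k:=\mathbf{G}^k-\nabla Q_{\rho_k}(\mathbf{x}^k)$. *)

From HB Require Import structures.
From mathcomp Require Import all_boot all_order all_algebra.
From mathcomp Require Import all_classical all_reals all_analysis.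
Set Implicit Arguments. Unset Strict Implicit. Unset Printing Implicit Defensive.
Import Order.TTheory GRing.Theory Num.Theory.
Import numFieldNormedType.Exports.
Local Open Scope classical_set_scope.
Local Open Scope ring_scope.

Section Defs.
Variable R : realType.

Definition dot (n : nat) (u v : 'cV[R]_n) : R := (u^T *m v) 0 0.
Definition enorm (n : nat) (v : 'cV[R]_n) : R := Num.sqrt (dot v v).

Definition gradient_of (n : nat) (f : 'cV[R]_n -> R) (gf : 'cV[R]_n -> 'cV[R]_n) :=
  forall x, differentiable f x /\ forall v, 'd f x v = dot (gf x) v.

(* Jc x (an n x m matrix) is the gradient nabla c(x) of c : R^n -> R^m,
   i.e. the transpose of the Jacobian: the differential is v |-> (Jc x)^T v *)
Definition gradmap_of (n m : nat) (c : 'cV[R]_n -> 'cV[R]_m)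
    (Jc : 'cV[R]_n -> 'M[R]_(n, m)) :=
  forall x, differentiable c x /\ forall v, 'd c x v = (Jc x)^T *m v.

Definition smooth_fun (n : nat) (L : R) (f : 'cV[R]_n -> R) (gf : 'cV[R]_n -> 'cV[R]_n) :=
  [/\ 0 <= L, gradient_of f gf &
      forall x y, enorm (gf x - gf y) <= L * enorm (x - y)].

Definition smooth_map (n m : nat) (L : R) (c : 'cV[R]_n -> 'cV[R]_m)
    (Jc : 'cV[R]_n -> 'M[R]_(n, m)) :=
  [/\ 0 <= L, gradmap_of c Jc &
      forall x y (u : 'cV[R]_m), enorm ((Jc x - Jc y) *m u) <= L * enorm (x - y) * enorm u].

Definition convex_fun (n : nat) (h : 'cV[R]_n -> R) :=
  forall x y (t : R), 0 <= t <= 1 ->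
    h (t *: x + (1 - t) *: y) <= t * h x + (1 - t) * h y.

Definition subgrad (n : nat) (h : 'cV[R]_n -> R) (x v : 'cV[R]_n) :=
  forall y, h x + dot v (y - x) <= h y.

Definition is_prox (n : nat) (mu : R) (h : 'cV[R]_n -> R) (v p : 'cV[R]_n) :=
  forall y, h p + enorm (p - v) ^+ 2 / (2 * mu) <= h y + enorm (y - v) ^+ 2 / (2 * mu).

Definition moreau (n : nat) (mu : R) (g : 'cV[R]_n -> R) (z : 'cV[R]_n) : R :=
  inf [set g x + enorm (x - z) ^+ 2 / (2 * mu) | x in [set: 'cV[R]_n]].

Definition Qpen (n m : nat) (f : 'cV[R]_n -> R) (c : 'cV[R]_n -> 'cV[R]_m) (rho : R)
    (x : 'cV[R]_n) : R := f x + rho / 2 * enorm (c x) ^+ 2.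

Definition potential (n m : nat) (f : 'cV[R]_n -> R) (c : 'cV[R]_n -> 'cV[R]_m)
    (h g : 'cV[R]_n -> R) (rho mu : R) (x z : 'cV[R]_n) : R :=
  Qpen f c rho x + h x + enorm (x - z) ^+ 2 / (2 * mu) - moreau mu g z.

Definition Lrho (rho0 Lf Lc G C rho : R) : R := rho * (rho0^-1 * Lf + G ^+ 2 + C * Lc).

Definition wnorm2 (n : nat) (x z : 'cV[R]_n) : R := enorm x ^+ 2 + enorm z ^+ 2.

End Defs.

From HB Require Import structures.
From mathcomp Require Import all_boot all_order all_algebra.
From mathcomp Require Import all_classical all_reals all_analysis.
From mathcomp Require Import ring lra.
Import Order.TTheory GRing.Theory Num.Theory.
Import numFieldNormedType.Exports.
Local Open Scope ring_scope.
Local Open Scope classical_set_scope.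

(* The x-update is an inexact proximal
   gradient step on Q_rho + h: the three-point inequality of prox_{mu h}, the descent lemma for
   the L_rho-smooth Q_rho and Young's inequality on the error e^k decrease the potential by
   ((2 mu)^-1 - L_rho)/2 |x' - x|^2, up to mu |e^k|^2. The relaxed z-update decreases
   |x - z|^2/(2 mu) - M_{mu g}(z) by |z' - z|^2/(2 mu), by the three-point inequality of
   prox_{mu g} and beta <= 1. Raising rho costs at most (rho' - rho) C^2/2 since |c| <= C, and
   shrinking mu costs Delta_{k+1}, as the Moreau envelope only grows when mu decreases. *)

Section Euclidean.
Context {R : realType} {n : nat}.
Implicit Types (a : R) (u v w : 'cV[R]_n).

Lemma dotE u v : dot u v = \sum_i u i 0 * v i 0.
Proof. by rewrite /dot mxE; apply: eq_bigr => i _; rewrite mxE. Qed.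

Lemma dotC u v : dot u v = dot v u.
Proof. by rewrite !dotE; apply: eq_bigr => i _; rewrite mulrC. Qed.

Lemma dotDl u v w : dot (u + v) w = dot u w + dot v w.
Proof. by rewrite !dotE -big_split; apply: eq_bigr => i _; rewrite mxE mulrDl. Qed.

Lemma dotDr u v w : dot w (u + v) = dot w u + dot w v.
Proof. by rewrite dotC dotDl !(dotC w). Qed.

Lemma dotZl a u v : dot (a *: u) v = a * dot u v.
Proof. by rewrite !dotE mulr_sumr; apply: eq_bigr => i _; rewrite mxE mulrA. Qed.

Lemma dotZr a u v : dot u (a *: v) = a * dot u v.
Proof. by rewrite dotC dotZl dotC. Qed.

Lemma dotNl u v : dot (- u) v = - dot u v.
Proof. by rewrite -scaleN1r dotZl mulN1r. Qed.

Lemma dotNr u v : dot u (- v) = - dot u v.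
Proof. by rewrite dotC dotNl dotC. Qed.

Lemma dotBl u v w : dot (u - v) w = dot u w - dot v w.
Proof. by rewrite dotDl dotNl. Qed.

Lemma dotBr u v w : dot w (u - v) = dot w u - dot w v.
Proof. by rewrite dotDr dotNr. Qed.

Definition dot_linE := (dotDl, dotDr, dotBl, dotBr, dotNl, dotNr, dotZl, dotZr).

Lemma dot_ge0 u : 0 <= dot u u.
Proof. by rewrite dotE; apply: sumr_ge0 => i _; rewrite -expr2 sqr_ge0. Qed.

Lemma enorm_ge0 u : 0 <= enorm u.
Proof. exact: sqrtr_ge0. Qed.

Lemma enorm_sqr u : enorm u ^+ 2 = dot u u.
Proof. by rewrite sqr_sqrtr // dot_ge0. Qed.

Lemma enormZ a u : enorm (a *: u) = `|a| * enorm u.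
Proof. by rewrite /enorm dotZl dotZr mulrA -expr2 sqrtrM ?sqr_ge0 // sqrtr_sqr. Qed.

Lemma enormN u : enorm (- u) = enorm u.
Proof. by rewrite /enorm dotNl dotNr opprK. Qed.

Lemma enorm_sqrD u v : enorm (u + v) ^+ 2 = enorm u ^+ 2 + 2 * dot u v + enorm v ^+ 2.
Proof. by rewrite !enorm_sqr !dot_linE (dotC v u); ring. Qed.

Lemma dot_self_eq0 u : dot u u = 0 -> u = 0.
Proof.
rewrite dotE => /eqP; rewrite psumr_eq0 => [/allP u0|i _]; last by rewrite -expr2 sqr_ge0.
apply/matrixP => i j; rewrite !mxE (ord1 j).
by have /u0 := mem_index_enum i; rewrite /= mulf_eq0 orbb => /eqP.
Qed.

Lemma dot_sqr_le u v : dot u v ^+ 2 <= dot u u * dot v v.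
Proof.
have [/dot_self_eq0 ->|u0] := eqVneq (dot u u) 0.
  by rewrite -(scale0r 0) !(dotZl, dotZr) !mul0r expr0n.
have uu : 0 < dot u u by rewrite lt_def u0 dot_ge0.
have := dot_ge0 (dot u u *: v - dot u v *: u).
rewrite !dot_linE (dotC v u) => H.
have : 0 <= dot u u * (dot u u * dot v v - dot u v ^+ 2) by lra.
by rewrite pmulr_rge0 // subr_ge0 mulrC.
Qed.

Lemma dot_le u v : dot u v <= enorm u * enorm v.
Proof.
have [uv0|uv0] := lerP (dot u v) 0; first by rewrite (le_trans uv0) ?mulr_ge0 ?enorm_ge0.
rewrite /enorm -sqrtrM ?dot_ge0 // -(ger0_norm (ltW uv0)) -sqrtr_sqr.
by rewrite ler_sqrt ?mulr_ge0 ?dot_ge0 // dot_sqr_le.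
Qed.

Lemma dot_le_young {a} u v : 0 < a -> dot u v <= a * dot u u + dot v v / (4 * a).
Proof.
move=> a0; have := dot_ge0 ((2 * a) *: u - v); rewrite !dot_linE (dotC v u) => H.
rewrite -subr_ge0.
have -> : a * dot u u + dot v v / (4 * a) - dot u v =
  (2 * a * (2 * a * dot u u - dot u v) - (2 * a * dot u v - dot v v)) / (4 * a).
  by field; rewrite gt_eqF.
by apply: divr_ge0; lra.
Qed.

End Euclidean.

Lemma directional_descent (R : realType) (V : normedModType R) (F : V -> R)
    (x d : V) (a b : R) :
  (forall t : R, derivable F (x + t *: d) d) ->
  (forall t : R, 0 <= t <= 1 -> 'D_d F (x + t *: d) <= a + b * t) ->
  F (x + d) <= F x + a + b / 2.
Proof.
move=> dF DF.
pose phi t := F (x + t *: d).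
have phi_quot t : (fun h : R => h^-1 *: (phi (h *: 1 + t) - phi t)) =
    (fun h : R => h^-1 *: (F (h *: d + (x + t *: d)) - F (x + t *: d))).
  by apply/funext => h; rewrite /phi scalerDl -[h *: 1]/(h * 1) mulr1 addrCA.
have dphi t : derivable phi t 1 by rewrite /derivable phi_quot; exact: dF.
pose psi t := phi t - (a * t + b / 2 * (t * t)).
have dpsi t : is_derive t (1 : R) psi ('D_d F (x + t *: d) - (a + b * t)).
  have -> : 'D_d F (x + t *: d) = 'D_1 phi t by rewrite /derive phi_quot.
  apply: is_deriveB; first exact: derivableP.
  by apply: is_derive_eq; rewrite /GRing.scale /=; lra.
have cpsi : {within `[0, 1], continuous psi}.
  by apply: derivable_within_continuous => t _; case: (dpsi t).
have [t t01 psiE] := MVT_segment ler01 (fun t _ => dpsi t) cpsi.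
have : psi 1 - psi 0 <= 0.
  by rewrite psiE subr0 mulr1 subr_le0 DF //; move: t01; rewrite in_itv.
by rewrite /psi /phi scale1r scale0r addr0; lra.
Qed.

Section Smoothness.
Context {R : realType} {n m : nat}.
Implicit Types (x y d : 'cV[R]_n) (u : 'cV[R]_m).

Lemma gradient_derive {f : 'cV[R]_n -> R} {gf} x d : gradient_of f gf ->
  derivable f x d /\ 'D_d f x = dot (gf x) d.
Proof.
by move=> /(_ x) [fx dfx]; split; [exact: diff_derivable | rewrite deriveE].
Qed.

Lemma gradmap_dot_derive {c : 'cV[R]_n -> 'cV[R]_m} {Jc} u x d : gradmap_of c Jc ->
  derivable (fun y => dot u (c y)) x d /\
  'D_d (fun y => dot u (c y)) x = dot (Jc x *m u) d.
Proof.
move=> /(_ x) [cx dcx].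
have dc : derivable c x d by exact: diff_derivable.
have /derivable_mxP dci := dc.
have Dci i : 'D_d (fun y => c y i 0) x = ('d c x d) i 0.
  by rewrite -deriveE // derive_mx // mxE.
have -> : (fun y => dot u (c y)) = \sum_(i < m) (u i 0 *: fun y => c y i 0).
  by apply/funext => y; rewrite fct_sumE dotE; apply: eq_bigr.
have dui i : derivable (u i 0 *: fun y => c y i 0) x d by exact: derivableZ.
split; first exact: derivable_sum.
rewrite derive_sum // /dot trmx_mul -mulmxA -dcx -/(dot u _) dotE.
by apply: eq_bigr => i _; rewrite deriveZ // Dci.
Qed.

Lemma smooth_fun_descent {f : 'cV[R]_n -> R} {gf Lf} x d : smooth_fun Lf f gf ->
  f (x + d) <= f x + dot (gf x) d + Lf / 2 * enorm d ^+ 2.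
Proof.
case=> Lf0 gradf Lip.
suff : f (x + d) <= f x + dot (gf x) d + (Lf * enorm d ^+ 2) / 2 by lra.
apply: directional_descent => [t|t /andP[t0 _]]; first by case: (gradient_derive (x + t *: d) d gradf).
have [_ ->] := gradient_derive (x + t *: d) d gradf.
rewrite -[dot (gf _) d](subrK (dot (gf x) d)) -dotBl addrC lerD2l.
apply: le_trans (dot_le _ _) _.
apply: le_trans (ler_wpM2r (enorm_ge0 _) (Lip _ _)) _.
rewrite addrC addKr enormZ ger0_norm // expr2.
by have := enorm_ge0 d; nra.
Qed.

Lemma smooth_map_dot_descent {c : 'cV[R]_n -> 'cV[R]_m} {Jc Lc} u x d :
  smooth_map Lc c Jc ->
  dot u (c (x + d)) <= dot u (c x) + dot (Jc x *m u) d + Lc * enorm u / 2 * enorm d ^+ 2.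
Proof.
case=> Lc0 gradc Lip.
suff : dot u (c (x + d)) <= dot u (c x) + dot (Jc x *m u) d + (Lc * enorm u * enorm d ^+ 2) / 2.
  by lra.
apply: (@directional_descent _ _ (fun y => dot u (c y))) => [t|t /andP[t0 _]].
  by case: (gradmap_dot_derive u (x + t *: d) d gradc).
have [_ ->] := gradmap_dot_derive u (x + t *: d) d gradc.
rewrite -[dot (Jc _ *m u) d](subrK (dot (Jc x *m u) d)) -dotBl -mulmxBl addrC lerD2l.
apply: le_trans (dot_le _ _) _.
apply: le_trans (ler_wpM2r (enorm_ge0 _) (Lip _ _ _)) _.
rewrite addrC addKr enormZ ger0_norm // expr2.
by have := enorm_ge0 d; have := enorm_ge0 u; nra.
Qed.

Lemma jacobian_bounded_lipschitz {c : 'cV[R]_n -> 'cV[R]_m} {Jc G} x d :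
  gradmap_of c Jc -> 0 <= G -> (forall y u, enorm (Jc y *m u) <= G * enorm u) ->
  enorm (c (x + d) - c x) <= G * enorm d.
Proof.
move=> gradc G0 JG; set w := c (x + d) - c x.
have : dot w (c (x + d)) <= dot w (c x) + G * enorm w * enorm d + 0 / 2.
  apply: (@directional_descent _ _ (fun y => dot w (c y))) => [t|t _].
    by case: (gradmap_dot_derive w (x + t *: d) d gradc).
  have [_ ->] := gradmap_dot_derive w (x + t *: d) d gradc.
  by rewrite mul0r addr0 (le_trans (dot_le _ _)) // ler_wpM2r ?enorm_ge0.
rewrite mul0r addr0 => Hw.
have : enorm w ^+ 2 <= enorm w * (G * enorm d) by rewrite enorm_sqr {2}/w dotBr; lra.
by have := enorm_ge0 w; have := mulr_ge0 G0 (enorm_ge0 d); nra.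
Qed.

Lemma Qpen_descent {f : 'cV[R]_n -> R} {gf} {c : 'cV[R]_n -> 'cV[R]_m} {Jc Lf Lc G C rho L}
    x y :
  smooth_fun Lf f gf -> smooth_map Lc c Jc -> 0 <= G ->
  (forall y u, enorm (Jc y *m u) <= G * enorm u) -> (forall y, enorm (c y) <= C) ->
  0 <= rho -> Lf + rho * (G ^+ 2 + C * Lc) <= L ->
  Qpen f c rho y <=
    Qpen f c rho x + dot (gf x + rho *: (Jc x *m c x)) (y - x) + L / 2 * enorm (y - x) ^+ 2.
Proof.
move=> sf sc G0 JG cC rho0 L_ge; have [Lc0 gradc _] := sc.
set d := y - x; have -> : y = x + d by rewrite addrC subrK.
have Hf := smooth_fun_descent x d sf.
have Hc := smooth_map_dot_descent (c x) x d sc.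
have Hw := jacobian_bounded_lipschitz x d gradc G0 JG.
have cx := cC x; have cx0 := enorm_ge0 (c x); have d0 := enorm_ge0 d.
have sq_cxd : enorm (c (x + d)) ^+ 2 =
    enorm (c x) ^+ 2 + 2 * (dot (c x) (c (x + d)) - dot (c x) (c x))
    + enorm (c (x + d) - c x) ^+ 2.
  by rewrite !enorm_sqr !dot_linE (dotC (c (x + d)) (c x)); ring.
rewrite /Qpen sq_cxd dotDl dotZl.
have : enorm (c (x + d) - c x) ^+ 2 <= G ^+ 2 * enorm d ^+ 2.
  by rewrite -exprMn lerXn2r ?nnegrE ?mulr_ge0 ?enorm_ge0.
have : Lc * enorm (c x) * enorm d ^+ 2 <= Lc * C * enorm d ^+ 2.
  by rewrite ler_wpM2r ?sqr_ge0 ?ler_wpM2l.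
have : (Lf + rho * (G ^+ 2 + C * Lc)) * enorm d ^+ 2 <= L * enorm d ^+ 2.
  by rewrite ler_wpM2r ?sqr_ge0.
nra.
Qed.

End Smoothness.

Lemma ge0_of_affine_ge0 (R : realFieldType) (a b : R) :
  (forall t, 0 < t <= 1 -> 0 <= a + t * b) -> 0 <= a.
Proof.
move=> ab; rewrite leNgt; apply/negP => a0.
have [b0|b0] := lerP b 0; first by have := ab 1; rewrite ltr01 lexx mul1r; lra.
pose t := - a / (b - a).
have t0 : 0 < t by rewrite divr_gt0 ?oppr_gt0 //; lra.
have t1 : t <= 1 by rewrite ler_pdivrMr ?mul1r; lra.
have tba : t * (b - a) = - a by rewrite divfK // gt_eqF //; lra.
by have := ab t; rewrite t0 t1 => /(_ isT); nra.
Qed.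

Section Prox.
Context {R : realType} {n : nat}.
Implicit Types (mu : R) (h : 'cV[R]_n -> R) (p v x y z : 'cV[R]_n).

Lemma prox_three_point {mu h v p} y : 0 < mu -> convex_fun h -> is_prox mu h v p ->
  h p + enorm (p - v) ^+ 2 / (2 * mu) + enorm (y - p) ^+ 2 / (2 * mu)
    <= h y + enorm (y - v) ^+ 2 / (2 * mu).
Proof.
move=> mu0 hconv hprox; set k := (2 * mu)^-1.
have k0 : 0 < k by rewrite invr_gt0 mulr_gt0.
set D := dot (p - v) (y - p).
have yvE t : enorm (p + t *: (y - p) - v) ^+ 2 =
    enorm (p - v) ^+ 2 + 2 * t * D + t ^+ 2 * enorm (y - p) ^+ 2.
  by rewrite addrAC [LHS]enorm_sqrD dotZr enormZ exprMn real_normK ?num_real // -/D mulrA.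
suff : 0 <= h y - h p + 2 * k * D.
  by have := yvE 1; rewrite scale1r (addrCA p) subrr addr0 => ->; nra.
(* first-order optimality of [p], from minimality along the segment [p, y] *)
apply: (@ge0_of_affine_ge0 _ _ (enorm (y - p) ^+ 2 * k)) => t /andP[t0 t1].
have := hprox (p + t *: (y - p)); rewrite yvE -/k.
have := hconv y p t; rewrite ltW //= t1 => /(_ isT).
have -> : t *: y + (1 - t) *: p = p + t *: (y - p).
  by rewrite scalerBr scalerBl scale1r addrCA addrA.
by nra.
Qed.

Lemma moreau_prox {mu g z p} : is_prox mu g z p ->
  moreau mu g z = g p + enorm (p - z) ^+ 2 / (2 * mu).
Proof.
move=> gprox; rewrite /moreau; set S := [set _ | _ in _].
have Sp : S (g p + enorm (p - z) ^+ 2 / (2 * mu)) by exists p.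
have Slb : lbound S (g p + enorm (p - z) ^+ 2 / (2 * mu)) by move=> _ [y _ <-].
apply/le_anti; rewrite ge_inf ?lb_le_inf //; last by exists (g p + enorm (p - z) ^+ 2 / (2 * mu)).
by exists (g p + enorm (p - z) ^+ 2 / (2 * mu)).
Qed.

Lemma le_moreau_prox {mu g z p} mu' : 0 < mu <= mu' -> is_prox mu g z p ->
  g p + enorm (p - z) ^+ 2 / (2 * mu') <= moreau mu g z.
Proof.
move=> /andP[mu0 mumu'] /moreau_prox ->; rewrite lerD2l ler_wpM2l ?sqr_ge0 //.
by rewrite lef_pV2 ?posrE ?mulr_gt0 ?ler_pM2l // (lt_le_trans mu0).
Qed.

End Prox.

Section Steps.
Context {R : realType} {n : nat}.
Implicit Types (mu L beta : R) (F h g : 'cV[R]_n -> R) (p x y z : 'cV[R]_n).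

Lemma prox_grad_step {F h mu L} {gF G x x' z : 'cV[R]_n} :
  0 < mu -> convex_fun h -> is_prox mu h (z - mu *: G) x' ->
  F x' <= F x + dot gF (x' - x) + L / 2 * enorm (x' - x) ^+ 2 ->
  F x' + h x' + enorm (x' - z) ^+ 2 / (2 * mu)
    <= F x + h x + enorm (x - z) ^+ 2 / (2 * mu)
       - ((2 * mu)^-1 - L) / 2 * enorm (x' - x) ^+ 2 + mu * enorm (G - gF) ^+ 2.
Proof.
move=> mu0 hconv hprox Fdesc.
have shiftE y : y - (z - mu *: G) = (y - z) + mu *: G by rewrite opprB addrA addrAC.
have splitE a b c : (a + 2 * (mu * b) + c) / (2 * mu) = a / (2 * mu) + b + c / (2 * mu).
  by field; rewrite gt_eqF.
have := prox_three_point x mu0 hconv hprox.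
rewrite !shiftE !(enorm_sqrD _ (mu *: G)) !dotZr !splitE -(opprB x') enormN.
have -> : dot (x' - z) G = dot (x - z) G + dot G (x' - x).
  by rewrite !dot_linE (dotC G x') (dotC G x); ring.
have := dot_le_young (gF - G) (x' - x) mu0.
rewrite -!enorm_sqr dotBl -[G - gF]opprB enormN.
have -> : enorm (x' - x) ^+ 2 / (4 * mu) = enorm (x' - x) ^+ 2 / (2 * mu) / 2.
  by field; rewrite gt_eqF.
by lra.
Qed.

Lemma relaxation_sqr_le {beta p x z z'} y : 0 <= beta <= 1 -> z' = z - beta *: (p - x) ->
  enorm (x - z') ^+ 2 - enorm (x - z) ^+ 2 + enorm (y - z) ^+ 2 - enorm (y - z') ^+ 2
    + enorm (z' - z) ^+ 2 <= enorm (y - p) ^+ 2.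
Proof.
move=> /andP[b0 b1] ->; set r := x - p; set d := y - x; set w := x - z.
have -> : x - (z - beta *: (p - x)) = w - beta *: r.
  by apply/matrixP => i j; rewrite !mxE; ring.
have -> : y - z = d + w by rewrite addrA subrK.
have -> : y - (z - beta *: (p - x)) = d + w - beta *: r.
  by apply/matrixP => i j; rewrite !mxE; ring.
have -> : z - beta *: (p - x) - z = beta *: r.
  by apply/matrixP => i j; rewrite !mxE; ring.
have -> : y - p = d + r by rewrite addrA subrK.
clearbody r d w.
(* LHS - RHS = - |d + (1 - beta) r|^2 - 2 beta (1 - beta) |r|^2 *)
have := dot_ge0 (d + (1 - beta) *: r).
have : 0 <= beta * (1 - beta) * dot r r by rewrite !mulr_ge0 ?dot_ge0 ?subr_ge0.
rewrite !enorm_sqr !dot_linE (dotC r d) (dotC r w) (dotC w d).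
by nra.
Qed.

Lemma relaxed_prox_step {g mu beta p x z z'} y :
  0 < mu -> convex_fun g -> 0 <= beta <= 1 -> is_prox mu g z p ->
  z' = z - beta *: (p - x) ->
  enorm (x - z') ^+ 2 / (2 * mu) - (g y + enorm (y - z') ^+ 2 / (2 * mu))
    <= enorm (x - z) ^+ 2 / (2 * mu) - moreau mu g z - enorm (z' - z) ^+ 2 / (2 * mu).
Proof.
move=> mu0 gconv b01 gprox z'E.
have := prox_three_point y mu0 gconv gprox.
have := relaxation_sqr_le y b01 z'E.
rewrite (moreau_prox gprox); set k := (2 * mu)^-1.
have k0 : 0 <= k by rewrite invr_ge0 mulr_ge0 ?ltW.
by nra.
Qed.

End Steps.

Lemma Qpen_le_rho {R : realType} {n m} (f : 'cV[R]_n -> R) {c : 'cV[R]_n -> 'cV[R]_m}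
    {rho rho' C x} :
  rho <= rho' -> enorm (c x) <= C ->
  Qpen f c rho' x <= Qpen f c rho x + (rho' - rho) / 2 * C ^+ 2.
Proof.
move=> rhorho' cC; rewrite /Qpen.
have : enorm (c x) ^+ 2 <= C ^+ 2 by rewrite lerXn2r ?nnegrE ?(le_trans _ cC) ?enorm_ge0.
by nra.
Qed.

Lemma ler_div_mu_step {R : realFieldType} {mu mu' a b : R} :
  0 < mu' <= mu -> 0 <= a -> 0 <= b ->
  a / (2 * mu') <= a / (2 * mu) + `|mu - mu'| / (2 * mu' ^+ 2) * (b + a).
Proof.
move=> /andP[mu'0 mu'mu] a0 b0; have mu0 := lt_le_trans mu'0 mu'mu.
rewrite ger0_norm ?subr_ge0 //.
have -> : a / (2 * mu') = a / (2 * mu) + (mu - mu') / (2 * mu' * mu) * a.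
  by field; rewrite !gt_eqF.
have inv_le : (2 * mu' * mu)^-1 <= (2 * mu' ^+ 2)^-1.
  by rewrite lef_pV2 ?posrE ?mulr_gt0 ?exprn_gt0 // expr2 mulrA ler_pM2l ?mulr_gt0.
rewrite lerD2l; apply: (@le_trans _ _ ((mu - mu') / (2 * mu' ^+ 2) * a)).
  by rewrite ler_wpM2r // ler_wpM2l ?subr_ge0.
apply: ler_wpM2l; last by rewrite lerDr.
by rewrite divr_ge0 ?subr_ge0 // mulr_ge0 // sqr_ge0.
Qed.

Lemma Lrho_ge (R : realType) (rho0 Lf Lc G C rho : R) :
  0 < rho0 <= rho -> 0 <= Lf -> Lf + rho * (G ^+ 2 + C * Lc) <= Lrho rho0 Lf Lc G C rho.
Proof.
move=> /andP[rho00 rho0rho] Lf0; rewrite /Lrho -addrA [leRHS]mulrDr mulrA lerD2r.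
by rewrite -[leLHS]mul1r ler_wpM2r // ler_pdivlMr ?mul1r.
Qed.

Lemma descent_rearrange (R : realFieldType) (mu L D S : R) :
  0 < mu -> mu * L <= 1 / 4 -> ((2 * mu)^-1 - L) / 2 * D <= S ->
  D <= 4 * mu / (1 - 2 * mu * L) * S.
Proof.
move=> mu0 muL KD; have pos : 0 < 1 - 2 * mu * L by lra.
have -> : D = 4 * mu / (1 - 2 * mu * L) * (((2 * mu)^-1 - L) / 2 * D).
  by field; rewrite !gt_eqF.
by rewrite ler_wpM2l // divr_ge0 ?mulr_ge0 ?ltW.
Qed.

Theorem lemmaC2 (R : realType) (n m : nat) (Xi : Type)
  (f : 'cV[R]_n -> R) (gradf : 'cV[R]_n -> 'cV[R]_n)
  (sgrad : 'cV[R]_n -> Xi -> 'cV[R]_n)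
  (c : 'cV[R]_n -> 'cV[R]_m) (Jc : 'cV[R]_n -> 'M[R]_(n, m))
  (h g : 'cV[R]_n -> R) (Lf Lc C G beta : R)
  (mu rho alpha : nat -> R) (xi : nat -> Xi)
  (x z Gk s : nat -> 'cV[R]_n) :
  smooth_fun Lf f gradf ->
  smooth_map Lc c Jc ->
  convex_fun h -> convex_fun g ->
  0 < C -> 0 < G ->
  (forall y, enorm (gradf y) <= G) ->
  (forall y v, subgrad h y v -> enorm v <= G) ->
  (forall y v, subgrad g y v -> enorm v <= G) ->
  (forall y (u : 'cV[R]_m), enorm (Jc y *m u) <= G * enorm u) ->
  (forall y, enorm (c y) <= C) ->
  0 < rho 0%N ->
  (forall k, 0 < mu k) ->
  (forall k, mu k * Lrho (rho 0%N) Lf Lc G C (rho k) <= 1 / 4) ->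
  (forall k, mu k.+1 <= mu k) ->
  (forall k, rho k <= rho k.+1) ->
  0 < beta <= 1 ->
  (* stochastic estimator: MoSSP-P (Polyak momentum) or MoSSP-R (recursive momentum) *)
  ((forall k, (0 < k)%N ->
      s k = (1 - alpha k.-1) *: s k.-1 + alpha k.-1 *: sgrad (x k) (xi k))
   \/
   (forall k, (0 < k)%N ->
      s k = sgrad (x k) (xi k) + (1 - alpha k.-1) *: (s k.-1 - sgrad (x k.-1) (xi k)))) ->
  (forall k, Gk k = s k + rho k *: (Jc (x k) *m c (x k))) ->
  (* iterates *)
  (forall k, is_prox (mu k) h (z k - mu k *: Gk k) (x k.+1)) ->
  (forall k, exists p, is_prox (mu k) g (z k) p /\ z k.+1 = z k - beta *: (p - x k.+1)) ->
  forall k : nat,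
  let Lk := Lrho (rho 0%N) Lf Lc G C (rho k) in
  let ek := Gk k - (gradf (x k) + rho k *: (Jc (x k) *m c (x k))) in
  let Delta := `|mu k - mu k.+1| / (2 * mu k.+1 ^+ 2)
                 * (C ^+ 2 + enorm (x k.+1 - z k.+1) ^+ 2) in
  let Pk := potential f c h g (rho k) (mu k) (x k) (z k) in
  let Pk1 := potential f c h g (rho k.+1) (mu k.+1) (x k.+1) (z k.+1) in
  let dw2 := wnorm2 (x k.+1 - x k) (z k.+1 - z k) in
  Pk1 <= Pk - ((2 * mu k)^-1 - Lk) / 2 * dw2
          + (rho k.+1 - rho k) / 2 * C ^+ 2 + Delta + mu k * enorm ek ^+ 2
  /\
  dw2 <= 4 * mu k / (1 - 2 * mu k * Lk)
          * (Pk - Pk1 + Delta + (rho k.+1 - rho k) / 2 * C ^+ 2 + mu k * enorm ek ^+ 2).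
Proof.
move=> sf sc hconv gconv C0 G0 _ _ _ JG cC rho00 mu0 muL mudec rhoinc /andP[b0 b1]
  _ _ hprox gprox k Lk ek Delta Pk Pk1 dw2.
have [p [gp zE]] := gprox k.
have [p1 [gp1 _]] := gprox k.+1.
have [[Lf0 _ _] [Lc0 _ _]] := (sf, sc).
have rho0k : rho 0%N <= rho k by apply: (nondecreasing_seqP rho).1.
have rhok0 : 0 <= rho k := le_trans (ltW rho00) rho0k.
have L_ge : Lf + rho k * (G ^+ 2 + C * Lc) <= Lk by rewrite Lrho_ge ?rho00.
have xstep := prox_grad_step (mu0 k) hconv (hprox k)
  (Qpen_descent (x k) (x k.+1) sf sc (ltW G0) JG cC rhok0 L_ge).
have b01 : 0 <= beta <= 1 by rewrite ltW.
have zstep := relaxed_prox_step p1 (mu0 k) gconv b01 gp zE.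
have mu1 : 0 < mu k.+1 <= mu k by rewrite mu0 mudec.
have moreau_step := le_moreau_prox (mu k) mu1 gp1.
have rho_step := Qpen_le_rho f (rhoinc k) (cC (x k.+1)).
have mu_step := ler_div_mu_step mu1 (sqr_ge0 (enorm (x k.+1 - z k.+1))) (sqr_ge0 C).
have z_decrease : ((2 * mu k)^-1 - Lk) / 2 * enorm (z k.+1 - z k) ^+ 2
    <= enorm (z k.+1 - z k) ^+ 2 / (2 * mu k).
  have Lk0 : 0 <= Lk.
    by apply: le_trans L_ge; rewrite addr_ge0 // mulr_ge0 // addr_ge0 ?sqr_ge0 // mulr_ge0 // ltW.
  have inv_gt0 : 0 < (2 * mu k)^-1 by rewrite invr_gt0 mulr_gt0.
  by rewrite mulrC ler_wpM2l ?sqr_ge0 //; lra.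
have descent : Pk1 <= Pk - ((2 * mu k)^-1 - Lk) / 2 * dw2
    + (rho k.+1 - rho k) / 2 * C ^+ 2 + Delta + mu k * enorm ek ^+ 2.
  by rewrite /Pk1 /Pk /potential /dw2 /wnorm2 /ek /Delta; lra.
by split=> //; apply: descent_rearrange (mu0 k) (muL k) _; rewrite -/Lk; lra.
Qed.
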